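(* Let $c\in[0,1]$ with $c\neq\frac12$, and define $f_c:[0,1]\to[0,1]$ by $$f_c(x)=\begin{cases} x, & x\in[0,\frac23),\\ (1-2c)x^2+2cx, & x\in[\frac23,1].\end{cases}$$ Let $f_c^n$ denote the $n$-fold composition of $f_c$ with itself and $x^{(n)}=f_c^n(x^{(0)})$. Then: 1. The set of fixed points of $f_c$ is $[0,\frac23)\cup\{1\}$. 2. If $0\le c<\frac12$, then for every $x^{(0)}\in[\frac23,1)$ there exist $n\in\mathbb N$ and $p\in[\frac49(1+c),\frac23)$ such that $f_c^n(x^{(0)})=p$ and $f_c^{n+1}(x^{(0)})=f_c(p)=p$. 3. If $\frac12<c\le1$, then $\lim_{n\to\infty}x^{(n)}=1$ for every $x^{(0)}\in[\frac23,1]$.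
   Context: This map is the reduction to $[0,1]$ of the quadratic stochastic operator $x'=x^2+2p(x)xy$, $y'=2(1-p(x))xy+y^2$ (with $y=1-x$), where $p(x)=a$ for $x\le\frac13$, $b$ for $\frac13<x<\frac23$, $c$ for $x\ge\frac23$, in the case $a=b=\frac12$. *)

From Stdlib Require Import Reals.
Open Scope R_scope.

(* f_c on [0,1]; defined on all of R, only used on [0,1]. *)
Definition fc (c x : R) : R :=
  if Rlt_dec x (2/3) then x else (1 - 2*c) * x^2 + 2*c*x.

Fixpoint fiter (c : R) (n : nat) (x : R) : R :=
  match n with
  | O => x
  | S m => fc c (fiter c m x)
  end.

From Stdlib Require Import Reals Lra Psatz.
Open Scope R_scope.

(* On [2/3, 1] the map is q(x) = (1 - 2c) x^2 + 2 c x, with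
   q(x) - x = (1 - 2c) x (x - 1)  and  1 - q(x) = (1 - x) (1 + (1 - 2c) x).
   For c < 1/2 the first identity shows that q lowers every point of [2/3, x0]
   by at least (1 - 2c) (2/3) (1 - x0), so the orbit of x0 < 1 leaves [2/3, 1)
   after finitely many steps; since q is increasing there, it lands in
   [q(2/3), 2/3) = [4/9 (1 + c), 2/3), where f_c is the identity.
   For c > 1/2, q maps [2/3, 1] into itself and the second identity shows that
   it contracts the distance to 1 by the factor (5 - 4c)/3 < 1. *)

Lemma fc_lt (c x : R) : x < 2/3 -> fc c x = x.
Proof. intro hx. unfold fc. destruct (Rlt_dec x (2/3)); lra. Qed.

Lemma fc_ge (c x : R) : 2/3 <= x -> fc c x = (1 - 2*c) * x^2 + 2*c*x.
Proof. intro hx. unfold fc. destruct (Rlt_dec x (2/3)); lra. Qed.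

Lemma fiter_Sr (c : R) (n : nat) (x : R) : fiter c (S n) x = fiter c n (fc c x).
Proof.
  induction n as [|n IH]; [reflexivity|].
  simpl in *. now rewrite IH.
Qed.

Lemma fc_fixed_iff (c x : R) : c <> 1/2 -> 0 <= x <= 1 ->
  (fc c x = x <-> (0 <= x < 2/3) \/ x = 1).
Proof.
  intros hc hx. destruct (Rlt_dec x (2/3)) as [hlt|hge].
  - rewrite fc_lt by exact hlt. lra.
  - rewrite fc_ge by lra. split.
    + intro hfix. right.
      assert (hprod : (1 - 2*c) * (x * (x - 1)) = 0) by (simpl in hfix; nra).
      destruct (Rmult_integral _ _ hprod) as [h|h]; [lra|].
      destruct (Rmult_integral _ _ h); lra.
    + intros [h|h]; [lra|]. subst x. simpl. ring.
Qed.

Lemma fc_ge_lower (c y : R) : 0 <= c <= 1 -> 2/3 <= y <= 1 ->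
  4/9 * (1 + c) <= fc c y.
Proof.
  intros hc hy. rewrite fc_ge by lra.
  (* q(y) - q(2/3) factors through y - 2/3, the cofactor being at least 4/3 - y *)
  assert (hcof : 0 <= (1 - 2*c) * (y + 2/3) + 2*c) by nra.
  assert (0 <= (y - 2/3) * ((1 - 2*c) * (y + 2/3) + 2*c))
    by (apply Rmult_le_pos; lra).
  simpl. nra.
Qed.

Lemma fc_drop (c x0 y : R) : c < 1/2 -> 2/3 <= y <= x0 -> x0 <= 1 ->
  fc c y <= y - (1 - 2*c) * (2/3) * (1 - x0).
Proof.
  intros hc hy hx0. rewrite fc_ge by lra.
  assert (0 <= (1 - 2*c) * ((y - 2/3) * (1 - x0)))
    by (apply Rmult_le_pos; [lra|apply Rmult_le_pos; lra]).
  assert (0 <= (1 - 2*c) * (y * (x0 - y)))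
    by (apply Rmult_le_pos; [lra|apply Rmult_le_pos; lra]).
  simpl. nra.
Qed.

Lemma fiter_escapes (c x0 : R) : 0 <= c < 1/2 -> x0 < 1 ->
  forall (n : nat) (x : R), 2/3 <= x <= x0 ->
  x - 2/3 < INR n * ((1 - 2*c) * (2/3) * (1 - x0)) ->
  exists k, 4/9 * (1 + c) <= fiter c k x < 2/3.
Proof.
  intros hc hx0 n.
  assert (hd : 0 < (1 - 2*c) * (2/3) * (1 - x0)) by nra.
  induction n as [|n IH]; intros x hx hgap.
  - simpl in hgap. lra.
  - rewrite S_INR in hgap.
    assert (hlow := fc_ge_lower c x ltac:(lra) ltac:(lra)).
    assert (hdrop := fc_drop c x0 x ltac:(lra) hx ltac:(lra)).
    destruct (Rlt_le_dec (fc c x) (2/3)) as [hlt|hge].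
    + exists 1%nat. simpl. lra.
    + rewrite Rmult_plus_distr_r, Rmult_1_l in hgap.
      destruct (IH (fc c x)) as [k hk]; [split; lra|lra|].
      exists (S k). now rewrite fiter_Sr.
Qed.

Lemma fiter_reaches_plateau (c x0 : R) : 0 <= c < 1/2 -> 2/3 <= x0 < 1 ->
  exists n, 4/9 * (1 + c) <= fiter c n x0 < 2/3.
Proof.
  intros hc hx0.
  assert (hd : 0 < (1 - 2*c) * (2/3) * (1 - x0)) by nra.
  destruct (INR_unbounded ((x0 - 2/3) / ((1 - 2*c) * (2/3) * (1 - x0)))) as [N hN].
  apply (fiter_escapes c x0 hc ltac:(lra) N x0); [lra|].
  replace (x0 - 2/3)
    with ((x0 - 2/3) / ((1 - 2*c) * (2/3) * (1 - x0)) * ((1 - 2*c) * (2/3) * (1 - x0)))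
    by (field; lra).
  apply Rmult_lt_compat_r; lra.
Qed.

Lemma fc_maps_upper (c y : R) : 1/2 <= c <= 1 -> 2/3 <= y <= 1 ->
  2/3 <= fc c y <= 1.
Proof.
  intros hc hy. split.
  - pose proof (fc_ge_lower c y ltac:(lra) hy). lra.
  - rewrite fc_ge by lra.
    assert (0 <= (1 - y) * (1 + (1 - 2*c) * y)) by (apply Rmult_le_pos; nra).
    simpl. nra.
Qed.

Lemma fc_gap_contract (c y : R) : 1/2 <= c <= 1 -> 2/3 <= y <= 1 ->
  1 - fc c y <= (5 - 4*c) / 3 * (1 - y).
Proof.
  intros hc hy. rewrite fc_ge by lra.
  replace (1 - ((1 - 2*c) * y^2 + 2*c*y)) with ((1 + (1 - 2*c) * y) * (1 - y))
    by (simpl; ring).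
  apply Rmult_le_compat_r; nra.
Qed.

Lemma fiter_gap_geometric (c x0 : R) (n : nat) : 1/2 <= c <= 1 -> 2/3 <= x0 <= 1 ->
  2/3 <= fiter c n x0 <= 1 /\ 1 - fiter c n x0 <= ((5 - 4*c) / 3) ^ n * (1 - x0).
Proof.
  intros hc hx0. induction n as [|n [hy hgap]].
  - simpl. lra.
  - simpl fiter. split; [now apply fc_maps_upper|].
    assert (hrate : 0 <= (5 - 4*c) / 3) by lra.
    eapply Rle_trans; [now apply fc_gap_contract|].
    simpl pow. rewrite Rmult_assoc.
    now apply Rmult_le_compat_l.
Qed.

Lemma Un_cv_geometric_bound (u : nat -> R) (l k : R) : 0 <= k < 1 ->
  (forall n, Rabs (u n - l) <= k ^ n) -> Un_cv u l.
Proof.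
  intros hk hu eps heps.
  destruct (pow_lt_1_zero k ltac:(rewrite Rabs_right; lra) eps heps) as [N hN].
  exists N. intros n hn. unfold R_dist.
  eapply Rle_lt_trans; [apply hu|].
  eapply Rle_lt_trans; [apply RRle_abs|now apply hN].
Qed.

Theorem theorem2p3 (c : R) (hc0 : 0 <= c) (hc1 : c <= 1) (hc : c <> 1/2) :
  (forall x : R, 0 <= x <= 1 ->
     (fc c x = x <-> ((0 <= x < 2/3) \/ x = 1)))
  /\
  (c < 1/2 -> forall x0 : R, 2/3 <= x0 < 1 ->
     exists (n : nat) (p : R),
       4/9 * (1 + c) <= p < 2/3 /\
       fiter c n x0 = p /\ fiter c (S n) x0 = fc c p /\ fc c p = p)
  /\
  (1/2 < c -> forall x0 : R, 2/3 <= x0 <= 1 ->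
     Un_cv (fun n => fiter c n x0) 1).
Proof.
  split; [|split].
  - intros x hx. now apply fc_fixed_iff.
  - intros hlt x0 hx0.
    destruct (fiter_reaches_plateau c x0 ltac:(lra) hx0) as [n hn].
    exists n, (fiter c n x0).
    repeat split; try lra; try reflexivity.
    apply fc_lt. lra.
  - intros hgt x0 hx0.
    apply (Un_cv_geometric_bound _ _ ((5 - 4*c) / 3)); [lra|].
    intro n. destruct (fiter_gap_geometric c x0 n ltac:(lra) hx0) as [hy hgap].
    assert (0 <= ((5 - 4*c) / 3) ^ n) by (apply pow_le; lra).
    rewrite Rabs_left1 by lra. nra.
Qed.
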